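(* Suppose that $X$ is a Polish space, $\langle R_{n}:n\in\mathbb{N}\rangle$ is a sequence of $F_{\sigma}$ subsets of $X\times X$, $\Gamma$ is a group of homeomorphisms of $X$, and $\mathcal{O}\subseteq X$ is a $\Gamma$-orbit such that for every $n\in\mathbb{N}$ and every open set $U\subseteq X$ intersecting $\mathcal{O}$ there are distinct $x,y\in\mathcal{O}\cap U$ with $\mathcal{O}\cap(R_{n})_{x}\cap(R_{n})_{y}=\emptyset$. Then there is a continuous injective map $\phi:2^{\omega}\to\overline{\mathcal{O}}$ such that for all $y,z\in2^{\omega}$: if $y\mathbin{\mathbb{E}_{0}}z$ then $\phi(y),\phi(z)$ lie in the same $\Gamma$-orbit, and if not $y\mathbin{\mathbb{E}_{0}}z$ then $(\phi(y),\phi(z))\notin\bigcup_{n\in\mathbb{N}}R_{n}$.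
   Context: For $R\subseteq X\times X$ and $x\in X$, $R_{x}=\{y\in X: (x,y)\in R\}$. $\mathbb{E}_{0}$ is the equivalence relation on $2^{\omega}$ given by $y\mathbin{\mathbb{E}_{0}}z$ iff there is $n$ with $y(m)=z(m)$ for all $m>n$. *)

From HB Require Import structures.
From mathcomp Require Import all_boot all_order all_algebra.
From mathcomp Require Import all_classical all_reals all_analysis.
From mathcomp Require Import Rstruct Rstruct_topology borel_hierarchy cantor.
Set Implicit Arguments. Unset Strict Implicit. Unset Printing Implicit Defensive.
Import Order.TTheory GRing.Theory Num.Theory.
Local Open Scope classical_set_scope.
Local Open Scope ring_scope.

Definition is_metric (X : Type) (d : X -> X -> Rdefinitions.R) : Prop :=
  [/\ forall x y, 0 <= d x y,
      forall x y, d x y = 0 <-> x = y,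
      forall x y, d x y = d y x &
      forall x y z, d x z <= d x y + d y z].

Definition metric_compatible (X : topologicalType) (d : X -> X -> Rdefinitions.R) : Prop :=
  forall U : set X, open U <->
    (forall x, U x -> exists2 e : Rdefinitions.R, 0 < e & forall y, d x y < e -> U y).

Definition metric_complete (X : topologicalType) (d : X -> X -> Rdefinitions.R) : Prop :=
  forall u : nat -> X,
    (forall e : Rdefinitions.R, 0 < e -> exists N, forall m n, (N <= m)%N -> (N <= n)%N ->
        d (u m) (u n) < e) ->
    exists l : X, u @ \oo --> l.

Definition separable_space (X : topologicalType) : Prop :=
  exists2 D : set X, countable D & dense D.

Definition polish (X : topologicalType) : Prop :=
  separable_space X /\
  exists d : X -> X -> Rdefinitions.R,
    [/\ is_metric d, metric_compatible d & metric_complete d].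

Definition homeomorphism (X : topologicalType) (g : X -> X) : Prop :=
  exists h : X -> X, [/\ cancel g h, cancel h g, continuous g & continuous h].

Definition homeo_group (X : topologicalType) (G : set (X -> X)) : Prop :=
  [/\ (forall g, G g -> homeomorphism g),
      G id,
      (forall g h, G g -> G h -> G (g \o h)) &
      (forall g, G g -> exists2 h, G h & cancel g h /\ cancel h g)].

Definition gorbit (X : Type) (G : set (X -> X)) (x : X) : set X :=
  [set y | exists2 g, G g & g x = y].

Definition rsection (X : Type) (R : set (X * X)) (x : X) : set X :=
  [set y | R (x, y)].

Definition E0 (y z : cantor_space) : Prop :=
  exists n : nat, forall m : nat, (n < m)%N -> y m = z m.

(* The embedding is the limit of a Cantor scheme of group elements: at stage m
   every map h built so far (one per binary word of length m) is extended to
   [h \o g0] and [h \o g1], with the same pair g0, g1 in G for all words.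
   Hence points y, z of 2^omega that agree from stage k on have images related
   by [branch z k \o (branch y k)^-1], a member of G.  The points g0 x0 and
   g1 x0 are chosen in the orbit, close to x0, distinct, and such that every
   pair (h (g1 x0), h' (g0 x0)), in either order, stays away from the first m
   closed pieces of the relations; such points exist because inside any open
   set meeting the orbit the hypothesis provides two orbit points whose
   sections share no orbit point, so one of them avoids any given orbit point.
   The radii halve, so the branches converge, and the margins survive in the
   limit. *)

From HB Require Import structures.
From mathcomp Require Import all_boot all_order all_algebra.
From mathcomp Require Import all_classical all_reals all_analysis borel_hierarchy cantor.
From mathcomp Require Import Rstruct Rstruct_topology lra.
From Stdlib Require Import ClassicalEpsilon.
Import Order.TTheory GRing.Theory Num.Theory.
Local Open Scope classical_set_scope.
Local Open Scope ring_scope.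

Local Notation RR := Rdefinitions.R.

Section FiniteMeets.
Context {T : Type} {F : set T -> Prop}.
Hypotheses (FT : F setT) (FI : forall A B, F A -> F B -> F (A `&` B)).

Lemma meets_In (A : Type) (L : seq A) (P : A -> set T) :
  (forall a, List.In a L -> F (P a)) -> F (fun t => forall a, List.In a L -> P a t).
Proof.
elim: L => [|a L IH] PL.
  by rewrite [X in F X](_ : _ = setT) //; apply/seteqP; split=> // t _ ? [].
rewrite [X in F X](_ : _ = P a `&` [set t | forall b, List.In b L -> P b t]).
  by apply: FI; [apply: PL; left | apply: IH => b bL; apply: PL; right].
apply/seteqP; split=> t /=.
  by move=> Pt; split=> [|b bL]; apply: Pt; [left | right].
by move=> [Pat PLt] b [<- | /PLt].
Qed.

Lemma meets_le (m : nat) (P : nat -> set T) :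
  (forall n, (n <= m)%N -> F (P n)) -> F (fun t => forall n, (n <= m)%N -> P n t).
Proof.
elim: m => [|m IH] Pm.
  rewrite [X in F X](_ : _ = P 0%N); first exact: Pm.
  by apply/seteqP; split=> t /=; [apply | move=> Pt n; rewrite leqn0 => /eqP->].
rewrite [X in F X](_ : _ = P m.+1 `&` [set t | forall n, (n <= m)%N -> P n t]).
  by apply: FI; [exact: Pm | apply: IH => n nm; apply: Pm; exact: leqW].
apply/seteqP; split=> t /=.
  by move=> Pt; split=> [|n nm]; apply: Pt => //; exact: leqW.
by move=> [Pmt Pt] n; rewrite leq_eqVlt => /predU1P[-> | /Pt].
Qed.

End FiniteMeets.

Lemma open_preimage_compl (T U V : topologicalType) (f : T -> U) (g : T -> V)
    (S : set (U * V)) :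
  continuous f -> continuous g -> closed S -> open [set t | ~ S (f t, g t)].
Proof.
move=> fc gc; rewrite -openC => oS.
have fgc : continuous (fun t => (f t, g t)).
  by move=> t; apply: cvg_pair; [exact: fc | exact: gc].
by move/continuousP: fgc => /(_ _ oS).
Qed.

Lemma nbhs_cylinder (y : cantor_space) m :
  nbhs y [set z : cantor_space | forall j, (j < m)%N -> z j = y j].
Proof.
elim: m => [|m IH]; first by apply: filterS filterT => z _ j; rewrite ltn0.
have ym : nbhs y [set z : cantor_space | z m = y m].
  exact: (@proj_continuous nat (fun _ => bool) m y _ (discrete_set1 (y m))).
apply: filterS (filterI IH ym) => z [zy zym] j.
by rewrite ltnS leq_eqVlt => /predU1P[-> | /zy].
Qed.

Section MetricSpace.
Context {X : topologicalType} {d : X -> X -> RR}.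
Hypotheses (dm : is_metric d) (dc : metric_compatible d).

Lemma dist_ge0 x y : 0 <= d x y. Proof. by case: dm. Qed.
Lemma dist_eq0 x y : d x y = 0 <-> x = y. Proof. by case: dm. Qed.
Lemma dist_sym x y : d x y = d y x. Proof. by case: dm. Qed.
Lemma dist_triangle x y z : d x z <= d x y + d y z. Proof. by case: dm. Qed.
Lemma distxx x : d x x = 0. Proof. exact/dist_eq0. Qed.

Lemma open_ball a e : open [set z | d a z < e].
Proof.
apply/(dc _).2 => z az; exists (e - d a z); first by rewrite subr_gt0.
by move=> y zy; have := dist_triangle a z y; rewrite /=; lra.
Qed.

Lemma nbhs_ball a e : 0 < e -> nbhs a [set z | d a z < e].
Proof. by move=> e0; apply: open_nbhs_nbhs; split; [exact: open_ball | rewrite /= distxx]. Qed.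

Lemma nbhs_ballP a U : nbhs a U -> exists2 e, 0 < e & forall z, d a z < e -> U z.
Proof.
rewrite nbhsE => -[B [oB Ba] BU].
by have [e e0 Be] := (dc B).1 oB a Ba; exists e => // z /Be /BU.
Qed.

Lemma closed_ball_le a c : closed [set z | d a z <= c].
Proof.
rewrite -[X in closed X]setCK; apply: open_closedC; apply/(dc _).2 => z /negP.
rewrite -ltNge => cz; exists (d a z - c); first by rewrite subr_gt0.
move=> y zy; apply/negP; rewrite -ltNge.
by have := dist_triangle a y z; rewrite (dist_sym y z); lra.
Qed.

Lemma metric_hausdorff : hausdorff_space X.
Proof.
move=> p q clpq; apply/dist_eq0; apply: contrapT => /eqP dpq.
have e0 : 0 < d p q / 2 by rewrite divr_gt0 // lt0r dpq dist_ge0.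
have [z [/= pz qz]] := clpq _ _ (nbhs_ball p _ e0) (nbhs_ball q _ e0).
by have := dist_triangle p z q; rewrite (dist_sym z q); lra.
Qed.

Lemma closed_margin (S : set (X * X)) a b : closed S -> ~ S (a, b) ->
  \forall r \near 0^'+, forall a' b', d a a' < r -> d b b' < r -> ~ S (a', b').
Proof.
rewrite -openC => oS nSab.
have [[A B] /= [aA bB] AB] : nbhs (a, b) (~` S) by exact: open_nbhs_nbhs.
have [ea ea0 Aa] := nbhs_ballP _ _ aA; have [eb eb0 Bb] := nbhs_ballP _ _ bB.
near=> r => a' b' aa' bb'; apply: (AB (a', b')); split.
- by apply: Aa; apply: lt_le_trans aa' _; near: r; exact: nbhs_right_le.
- by apply: Bb; apply: lt_le_trans bb' _; near: r; exact: nbhs_right_le.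
Unshelve. all: by end_near.
Qed.

End MetricSpace.

Section HomeoGroup.
Context {X : topologicalType} {G : set (X -> X)} (HG : homeo_group G).

Lemma homeo_group_cont {g} : G g -> continuous g.
Proof. by case: HG => Ghomeo _ _ _ /Ghomeo[h [_ _ ? _]]. Qed.
Lemma homeo_group_id : G id. Proof. by case: HG. Qed.
Lemma homeo_group_comp {g h} : G g -> G h -> G (g \o h).
Proof. by case: HG => _ _ Gcomp _; apply: Gcomp. Qed.
Lemma homeo_group_inv {g} : G g -> exists2 h, G h & cancel g h /\ cancel h g.
Proof. by case: HG => _ _ _; apply. Qed.
Lemma homeo_group_inj {g} : G g -> injective g.
Proof. by move=> /homeo_group_inv[h _ [gh _]]; exact: can_inj gh. Qed.

Lemma gorbit_refl x : gorbit G x x.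
Proof. by exists id => //; exact: homeo_group_id. Qed.
Lemma gorbitG {x g a} : G g -> gorbit G x a -> gorbit G x (g a).
Proof. by move=> Gg [f Gf <-]; exists (g \o f) => //; exact: homeo_group_comp. Qed.

End HomeoGroup.

Section CantorScheme.
Context {X : topologicalType} {d : X -> X -> RR}.
Hypotheses (dm : is_metric d) (dc : metric_compatible d).
Context {G : set (X -> X)} {x0 : X} {D : nat -> set (X * X)}.
Hypothesis HG : homeo_group G.
Hypothesis D_closed : forall k, closed (D k).

Local Notation O := (gorbit G x0).

Hypothesis D_sep : forall k U, open U -> O `&` U !=set0 ->
  exists x y, [/\ x <> y, (O `&` U) x, (O `&` U) y &
    O `&` rsection (D k) x `&` rsection (D k) y = set0].

Definition shrinkable (P : set X) := forall U, open U -> O `&` U !=set0 ->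
  exists2 V, [/\ open V, V `<=` U & O `&` V !=set0] & V `<=` P.

Lemma shrinkableT : shrinkable setT.
Proof. by move=> U oU OU; exists U; split. Qed.

Lemma shrinkableI P Q : shrinkable P -> shrinkable Q -> shrinkable (P `&` Q).
Proof.
move=> shP shQ U oU OU; have [V [oV VU OV] VP] := shP U oU OU.
have [W [oW WV OW] WQ] := shQ V oV OV.
by exists W => [|p Wp]; [split=> // p /WV /VU | split; [exact/VP/WV | exact: WQ]].
Qed.

Lemma orbit_point_neq {U} w : open U -> O `&` U !=set0 -> exists p, [/\ O p, U p & p <> w].
Proof.
move=> oU OU; have [x [y [xy [Ox Ux] [Oy Uy] _]]] := D_sep 0 _ oU OU.
have [xw|xw] := pselect (x = w); last by exists x.
by exists y; split=> // yw; apply: xy; rewrite xw yw.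
Qed.

Lemma shrinkable_avoid k {h w} : G h -> O w -> shrinkable (fun p => ~ D k (h p, w)).
Proof.
move=> Gh Ow U oU [p [Op Up]].
have [h' Gh' [hK h'K]] := homeo_group_inv HG Gh.
have oV : open (h' @^-1` U) by move: (homeo_group_cont HG Gh') => /continuousP; apply.
have OV : O `&` (h' @^-1` U) !=set0 by exists (h p); split; [exact: gorbitG | rewrite /= hK].
have [x [y [_ [Ox Ux] [Oy Uy] Dxy]]] := D_sep k _ oV OV.
have [a [Oa Ua Daw]] : exists a, [/\ O a, U (h' a) & ~ D k (a, w)].
  have [Dxw|] := pselect (D k (x, w)); last by exists x.
  exists y; split=> // Dyw.
  by have : (O `&` rsection (D k) x `&` rsection (D k) y) w by []; rewrite Dxy.
exists (U `&` [set q | ~ D k (h q, w)]); last by move=> ? [].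
split; [apply: openI => // | by move=> ? [] |].
- exact: open_preimage_compl (homeo_group_cont HG Gh) (@cst_continuous _ _ w) (D_closed k).
- by exists (h' a); split; [exact: gorbitG | split; rewrite //= h'K].
Qed.

Section Stage.
Variables (m : nat) (H : seq (X -> X)).
Hypothesis HG_H : forall h, List.In h H -> G h.

Definition apart (p q : X) : Prop := forall h, List.In h H -> forall h', List.In h' H ->
  forall k, (k <= m)%N -> ~ D k (h p, h' q).

Definition uniformly_apart (p q : X) (r : RR) : Prop :=
  forall h, List.In h H -> forall h', List.In h' H -> forall k, (k <= m)%N ->
    forall a b, d (h p) a < r -> d (h' q) b < r -> ~ D k (a, b).

Lemma uniformly_apartW p q r r' : r' <= r -> uniformly_apart p q r -> uniformly_apart p q r'.
Proof.
move=> r'r pq h hH h' h'H k km a b ha hb.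
by apply: (pq h hH h' h'H k km); apply: lt_le_trans r'r.
Qed.

Lemma shrinkable_apart {q} : O q -> shrinkable (fun p => apart p q).
Proof.
move=> Oq; rewrite /apart; apply: (meets_In shrinkableT shrinkableI) => h hH.
apply: (meets_In shrinkableT shrinkableI) => h' h'H.
apply: (meets_le shrinkableI) => k _.
exact (shrinkable_avoid k (HG_H _ hH) (gorbitG HG (HG_H _ h'H) Oq)).
Qed.

Lemma open_apart p : open (apart p).
Proof.
rewrite /apart; apply: (meets_In openT (@openI X)) => h hH.
apply: (meets_In openT (@openI X)) => h' h'H.
apply: (meets_le (@openI X)) => k _.
exact: open_preimage_compl (@cst_continuous _ _ (h p)) (homeo_group_cont HG (HG_H _ h'H)) (D_closed k).
Qed.

(* x0 lies in the open set of points q apart from the first chosen point, so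
   that set meets the orbit and the second point can be chosen in it. *)
Lemma separated_pair {U} : open U -> U x0 ->
  exists p0 p1, [/\ O p0, O p1, U p0 & U p1] /\ [/\ p0 <> p1, apart p1 p0 & apart p0 p1].
Proof.
move=> oU Ux0.
have OU : O `&` U !=set0 by exists x0; split=> //; exact: gorbit_refl.
have [V1 [oV1 V1U OV1] V1apart] := shrinkable_apart (gorbit_refl HG x0) _ oU OU.
have [p1 [Op1 V1p1 p1x0]] := orbit_point_neq x0 oV1 OV1.
pose W := U `&` apart p1.
have oW : open W by apply: openI => //; exact: open_apart.
have OW : O `&` W !=set0.
  by exists x0; split; [exact: gorbit_refl | split=> //; exact: V1apart].
have [V2 [oV2 V2W OV2] V2apart] := shrinkable_apart Op1 _ oW OW.
have [p0 [Op0 V2p0 p0p1]] := orbit_point_neq p1 oV2 OV2.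
have [Up0 p1p0] := V2W _ V2p0.
by exists p0, p1; split; [split=> //; exact: V1U | split=> //; exact: V2apart].
Qed.

Lemma apart_uniformly p q : apart p q -> \forall r \near 0^'+, uniformly_apart p q r.
Proof.
move=> pq; apply: (meets_In filterT (@filterI _ _ _)) => h hH.
apply: (meets_In filterT (@filterI _ _ _)) => h' h'H.
apply: (meets_le (@filterI _ _ _)) => k km.
exact: closed_margin (D_closed k) (pq h hH h' h'H k km).
Qed.

Record split_data := SplitData { split_left : X -> X; split_right : X -> X; split_radius : RR }.

(* Every limit of branches through a split lies within [2 * r] of the image of
   g0 x0 or g1 x0 (approx_lim): inside the [3 * r] margins, and too close to
   be equal for the two sides of the split, which are [4 * r] apart. *)
Definition good_split (e : RR) (s : split_data) : Prop :=
  let: SplitData g0 g1 r := s in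
  [/\ G g0 /\ G g1, [/\ 0 < r, r <= e / 2 & r <= m.+1%:R^-1],
    forall h, List.In h H -> d (h x0) (h (g0 x0)) < e /\ d (h x0) (h (g1 x0)) < e,
    forall h, List.In h H -> 4 * r < d (h (g0 x0)) (h (g1 x0)) &
    uniformly_apart (g1 x0) (g0 x0) (3 * r) /\ uniformly_apart (g0 x0) (g1 x0) (3 * r)].

Lemma good_split_exists e : 0 < e -> exists s, good_split e s.
Proof.
move=> e0; pose U := fun p => forall h, List.In h H -> d (h x0) (h p) < e.
have oU : open U.
  apply: (meets_In openT (@openI X)) => h hH.
  by move: (homeo_group_cont HG (HG_H _ hH)) => /continuousP /(_ _ (open_ball dm dc (h x0) e)).
have Ux0 : U x0 by move=> h _; rewrite (distxx dm).
have [p0 [p1 [[[g0 Gg0 <-] [g1 Gg1 <-] Up0 Up1] [p01 ap10 ap01]]]] := separated_pair oU Ux0.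
have dist_pos h : List.In h H -> 0 < d (h (g0 x0)) (h (g1 x0)) / 2.
  move=> hH; rewrite divr_gt0 // lt0r dist_ge0 // andbT.
  by apply/eqP => /(dist_eq0 dm) /(homeo_group_inj HG (HG_H _ hH)) /p01.
have : \forall r \near 0^'+, [/\ 0 < r, r <= e, r <= m.+1%:R^-1,
    forall h, List.In h H -> r < d (h (g0 x0)) (h (g1 x0)) / 2 &
    uniformly_apart (g1 x0) (g0 x0) r /\ uniformly_apart (g0 x0) (g1 x0) r].
  near=> r; split.
  - by near: r; exact: nbhs_right_gt.
  - by near: r; exact: nbhs_right_le.
  - by near: r; apply: nbhs_right_le; rewrite invr_gt0.
  - near: r; apply: (meets_In filterT (@filterI _ _ _)) => h hH.
    exact: nbhs_right_lt (dist_pos h hH).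
  - by split; near: r; exact: apart_uniformly.
move=> /filter_ex[r [r0 re rm rsep [r10 r01]]].
have r3 : 3 * (r / 3) <= r by lra.
exists (SplitData g0 g1 (r / 3)); split=> //.
- by split; [lra | lra | apply: le_trans rm; lra].
- by move=> h hH; split; [exact: Up0 | exact: Up1].
- by move=> h hH; have := rsep h hH; lra.
- by split; exact: uniformly_apartW r3 _.
Unshelve. all: by end_near.
Qed.

End Stage.

Definition choose_split m H e : split_data :=
  epsilon (inhabits (SplitData id id 0)) (good_split m H e).

Fixpoint scheme n : seq (X -> X) * RR :=
  if n is m.+1 then
    let s := choose_split m (scheme m).1 (scheme m).2 in
    (List.flat_map (fun h => [:: h \o split_left s; h \o split_right s]) (scheme m).1,
     split_radius s)
  else ([:: id], 1).

Definition level n := (scheme n).1.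
Definition radius n := (scheme n).2.
Definition split_at n := choose_split n (level n) (radius n).

Lemma levelS n : level n.+1 =
  List.flat_map (fun h => [:: h \o split_left (split_at n); h \o split_right (split_at n)]) (level n).
Proof. by []. Qed.

Lemma radiusS n : radius n.+1 = split_radius (split_at n).
Proof. by []. Qed.

Lemma split_at_good n : (forall h, List.In h (level n) -> G h) -> 0 < radius n ->
  good_split n (level n) (radius n) (split_at n).
Proof.
by move=> GH r0; exact: epsilon_spec (inhabits (SplitData id id 0)) _ (good_split_exists n _ GH _ r0).
Qed.

Lemma scheme_inv n : (forall h, List.In h (level n) -> G h) /\ 0 < radius n.
Proof.
elim: n => [|n [GH r0]]; first by split=> // h [<- | []]; exact: homeo_group_id.
move: (split_at_good n GH r0); rewrite levelS radiusS.
case: (split_at n) => g0 g1 r [[Gg0 Gg1] [r'0 _ _] _ _ _].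
split=> // h /List.in_flat_map[h' [h'H /= [<- | [<- | []]]]];
  by apply: homeo_group_comp => //; exact: GH.
Qed.

Lemma good_split_at n : good_split n (level n) (radius n) (split_at n).
Proof. by have [GH r0] := scheme_inv n; exact: split_at_good. Qed.

Definition split_map n (b : bool) :=
  if b then split_right (split_at n) else split_left (split_at n).

Fixpoint branch (y : cantor_space) n : X -> X :=
  if n is m.+1 then branch y m \o split_map m (y m) else id.

Definition approx y n := branch y n x0.

Lemma branch_level y n : List.In (branch y n) (level n).
Proof.
elim: n => [|n IH] /=; first by left.
apply/List.in_flat_map; exists (branch y n); split=> //.
by rewrite /split_map; case: (y n); [right; left | left].
Qed.

Lemma branchG y n : G (branch y n).
Proof. exact: (scheme_inv n).1 (branch_level y n). Qed.

Lemma radius_gt0 n : 0 < radius n.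
Proof. exact: (scheme_inv n).2. Qed.

Lemma radius_half n : radius n.+1 <= radius n / 2.
Proof. by have := good_split_at n; rewrite radiusS; case: (split_at n) => ? ? ? [_ []]. Qed.

Lemma radius_inv n : radius n.+1 <= n.+1%:R^-1.
Proof. by have := good_split_at n; rewrite radiusS; case: (split_at n) => ? ? ? [_ []]. Qed.

Lemma approx_step y n : d (approx y n) (approx y n.+1) < radius n.
Proof.
have := good_split_at n; rewrite /approx /= /split_map.
case: (split_at n) => g0 g1 r [_ _ near_x0 _ _].
by have [] := near_x0 _ (branch_level y n); case: (y n).
Qed.

Lemma approx_cauchy y m k :
  d (approx y m) (approx y (m + k)) <= 2 * radius m - 2 * radius (m + k).
Proof.
elim: k => [|k IH]; first by rewrite addn0 (distxx dm); lra.
have := dist_triangle dm (approx y m) (approx y (m + k)) (approx y (m + k.+1)).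
by have := approx_step y (m + k); have := radius_half (m + k); rewrite addnS; lra.
Qed.

Lemma approx_close y {m M} : (m <= M)%N -> d (approx y m) (approx y M) <= 2 * radius m.
Proof.
move=> mM; have := approx_cauchy y m (M - m); rewrite subnKC //.
by have := radius_gt0 M; lra.
Qed.

Lemma radius_small (e : RR) : 0 < e -> exists N, forall n, (N <= n)%N -> radius n < e.
Proof.
move=> e0; have ei : 0 < e^-1 by rewrite invr_gt0.
have := archi_boundP (ltW ei).
set K := Num.Def.archi_bound _ => eK.
exists K.+1 => -[|n] // Kn; apply: le_lt_trans (radius_inv n) _.
rewrite -[e]invrK ltf_pV2 ?posrE ?invr_gt0 ?ltr0n //.
by apply: lt_le_trans eK _; rewrite ler_nat ltnW.
Qed.

Lemma approx_orbit y n : O (approx y n).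
Proof. exact: (gorbitG HG (branchG y n) (gorbit_refl HG x0)). Qed.

Lemma approx_lim {y l} m : approx y @ \oo --> l -> d (approx y m) l <= 2 * radius m.
Proof.
move=> yl; apply: (closed_cvg _ (closed_ball_le dm dc (approx y m) _) _ _ yl).
by exists m => // M; exact: approx_close.
Qed.

Lemma branch_prefix {y z m} : (forall j, (j < m)%N -> y j = z j) -> branch y m = branch z m.
Proof.
elim: m => [//|m IH] yz /=.
by rewrite IH ?yz // => j jm; apply: yz; exact: ltnW.
Qed.

Lemma branch_tail {y z k} : (forall j, (k <= j)%N -> y j = z j) ->
  forall M, exists T, branch y (k + M) = branch y k \o T /\ branch z (k + M) = branch z k \o T.
Proof.
move=> yz; elim=> [|M [T [yT zT]]]; first by exists id; rewrite addn0.
exists (T \o split_map (k + M) (y (k + M))); rewrite addnS /= yT zT.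
by rewrite yz ?leq_addr.
Qed.

Section Limit.
Variable phi : cantor_space -> X.
Hypothesis phi_lim : forall y, approx y @ \oo --> phi y.

Lemma phi_continuous : continuous phi.
Proof.
move=> y B /(nbhs_ballP dc)[e e0 eB].
have [m /(_ m (leqnn m)) me] := radius_small (e / 4) ltac:(lra).
apply: filterS (nbhs_cylinder y m) => z zy; apply: eB.
have := approx_lim m (phi_lim y); have := approx_lim m (phi_lim z).
rewrite /approx (branch_prefix zy) -/(approx y m) => zm ym.
by have := dist_triangle dm (phi y) (approx y m) (phi z); rewrite (dist_sym dm (phi y) (approx y m)); lra.
Qed.

Lemma phi_injective : injective phi.
Proof.
move=> y z yz; apply/funext => n; apply/eqP/negPn/negP => ynz.
have [k ykz kmin] := ex_minnP (ex_intro (fun n => y n != z n) n ynz).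
have yz_k j : (j < k)%N -> y j = z j.
  by move=> jk; apply/eqP/negPn/negP => /kmin; rewrite leqNgt jk.
have := good_split_at k.
move: (approx_lim k.+1 (phi_lim y)) (approx_lim k.+1 (phi_lim z)).
rewrite radiusS /approx /= /split_map (branch_prefix yz_k) yz.
case: (split_at k) => g0 g1 r /= + + [_ _ _ far _].
have := far _ (branch_level z k).
have := dist_triangle dm (branch z k (g0 x0)) (phi z) (branch z k (g1 x0)).
by rewrite (dist_sym dm (phi z)); case: (y k) (z k) ykz => [] [] //= _; lra.
Qed.

Lemma phi_closure y : closure O (phi y).
Proof.
move=> B /(nbhs_ballP dc)[e e0 eB].
have [m /(_ m (leqnn m)) me] := radius_small (e / 4) ltac:(lra).
exists (approx y m); split; first exact: approx_orbit.
by apply: eB; have := approx_lim m (phi_lim y); rewrite (dist_sym dm); lra.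
Qed.

Lemma phi_E0 y z : E0 y z -> exists2 g, G g & g (phi y) = phi z.
Proof.
move=> [n yz]; pose k := n.+1.
have [g Gg [gK _]] := homeo_group_inv HG (branchG y k).
have Gzg : G (branch z k \o g) := homeo_group_comp HG (branchG z k) Gg.
exists (branch z k \o g) => //.
have to_gy : (branch z k \o g) \o approx y @ \oo --> (branch z k \o g) (phi y).
  exact: continuous_cvg (homeo_group_cont HG Gzg (phi y)) (phi_lim y).
apply: (cvg_unique (metric_hausdorff dm dc) to_gy).
apply: cvg_trans (phi_lim z); apply: near_eq_cvg; exists k => // M /= kM.
have [T [yT zT]] := branch_tail yz (M - k).
by rewrite /approx -(subnKC kM) yT zT /= gK.
Qed.

Lemma phi_notE0 y z : ~ E0 y z -> ~ (\bigcup_k D k) (phi y, phi z).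
Proof.
move=> nE [k _ Dk].
have [m [km yzm]] : exists m, (k <= m)%N /\ y m != z m.
  apply: contrapT => nm; apply: nE; exists k => j kj; apply/eqP/negPn/negP => yzj.
  by apply: nm; exists j; split=> //; exact: ltnW.
have := good_split_at m.
move: (approx_lim m.+1 (phi_lim y)) (approx_lim m.+1 (phi_lim z)).
have := radius_gt0 m.+1; rewrite radiusS /approx /= /split_map.
case: (split_at m) => g0 g1 r /= r0 + + [_ _ _ _ [ap10 ap01]].
case: (y m) (z m) yzm => [] [] //= _ ny nz; [move: ap10 | move: ap01];
  by move=> /(_ _ (branch_level y m) _ (branch_level z m) k km (phi y) (phi z)); apply=> //; lra.
Qed.

End Limit.

Hypothesis dcomp : metric_complete d.

Lemma approx_cvg y : exists l : X, approx y @ \oo --> l.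
Proof.
apply: dcomp => e e0; have [N Ne] := radius_small (e / 2) ltac:(lra).
exists N => m n Nm Nn; case: (leqP m n) => mn.
  by have := approx_close y mn; have := Ne m Nm; lra.
by rewrite (dist_sym dm); have := approx_close y (ltnW mn); have := Ne n Nn; lra.
Qed.

Lemma cantor_scheme_embedding : exists phi : cantor_space -> X,
  [/\ continuous phi, injective phi, (forall y, closure O (phi y)),
    (forall y z, E0 y z -> exists2 g, G g & g (phi y) = phi z) &
    (forall y z, ~ E0 y z -> ~ (\bigcup_k D k) (phi y, phi z))].
Proof.
have [phi phi_lim] := boolp.choice approx_cvg.
exists phi; split; [exact: phi_continuous phi_lim | exact: phi_injective phi_lim |
  exact: phi_closure phi_lim | exact: phi_E0 phi_lim | exact: phi_notE0 phi_lim].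
Qed.

End CantorScheme.

Lemma Fsigma_closed_enum {T : topologicalType} {R : nat -> set T} :
  (forall n, Fsigma (R n)) ->
  exists D : nat -> set T, [/\ forall k, closed (D k),
    forall k, exists n, D k `<=` R n & \bigcup_n R n `<=` \bigcup_k D k].
Proof.
move=> RF; have /boolp.choice[C RC] : forall n, exists C : nat -> set T,
    (forall i, closed (C i)) /\ R n = \bigcup_i C i.
  by move=> n; have [C Cc RC] := RF n; exists C.
exists (fun k => if @unpickle (nat * nat)%type k is Some (n, i) then C n i else set0); split.
- by move=> k; case: unpickle => [[n i]|]; [exact: (RC n).1 | exact: closed0].
- move=> k; case: unpickle => [[n i]|]; last by exists 0%N.
  by exists n; rewrite (RC n).2; exact: bigcup_sup.
- move=> p [n _]; rewrite (RC n).2 => -[i _ Cp].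
  by exists (pickle (n, i)) => //; rewrite pickleK.
Qed.

Lemma rsection_sep_sub {X : Type} {O : set X} {R S : set (X * X)} {x y} :
  S `<=` R -> O `&` rsection R x `&` rsection R y = set0 ->
  O `&` rsection S x `&` rsection S y = set0.
Proof.
move=> SR; rewrite -!subset0 => Rxy w [[Ow Sxw] Syw].
by apply: (Rxy w); split; [split=> //; exact: SR | exact: SR].
Qed.

Theorem theorem2p2 (X : topologicalType) (R : nat -> set (X * X))
  (G : set (X -> X)) (O : set X) :
  polish X ->
  (forall n, Fsigma (R n)) ->
  homeo_group G ->
  (exists x0 : X, O = gorbit G x0) ->
  (forall (n : nat) (U : set X), open U -> O `&` U !=set0 ->
     exists x y : X, [/\ x <> y, (O `&` U) x, (O `&` U) y &
       O `&` rsection (R n) x `&` rsection (R n) y = set0]) ->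
  exists phi : cantor_space -> X,
    [/\ continuous phi,
        injective phi,
        (forall y, closure O (phi y)),
        (forall y z, E0 y z -> exists2 g, G g & g (phi y) = phi z) &
        (forall y z, ~ E0 y z -> ~ (\bigcup_n R n) (phi y, phi z))].
Proof.
move=> [_ [d [dm dc dcomp]]] RF HG [x0 ->] R_sep.
have [D [D_closed DR RD]] := Fsigma_closed_enum RF.
have D_sep k U : open U -> gorbit G x0 `&` U !=set0 ->
    exists x y, [/\ x <> y, (gorbit G x0 `&` U) x, (gorbit G x0 `&` U) y &
      gorbit G x0 `&` rsection (D k) x `&` rsection (D k) y = set0].
  move=> oU OU; have [n Dn] := DR k; have [x [y [xy Ux Uy Rxy]]] := R_sep n U oU OU.
  by exists x, y; split=> //; exact: rsection_sep_sub Dn Rxy.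
have [phi [? ? ? ? phi_D]] := cantor_scheme_embedding dm dc HG D_closed D_sep dcomp.
by exists phi; split=> // y z /phi_D nD /RD.
Qed.
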